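(* For every $N\ge 1$ and every integer $n\ge 1$, $$\Pr[\mathcal{N}_1(N)=n]=\frac{1}{(N-1)!}\left\langle {N-1\atop n-1}\right\rangle ,$$ where $\left\langle {m\atop j}\right\rangle$ is the Eulerian number, i.e. the number of permutations of $\{1,\dots,m\}$ with exactly $j$ descents (with $\left\langle {0\atop 0}\right\rangle=1$ and $\left\langle {m\atop j}\right\rangle=0$ for $j<0$ or $j\ge \max(m,1)$).
   Context: A random recursive hypergraph (RRH) is the random hypergraph process defined as follows. At size $N=1$ it has vertex set $\{v_1\}$ and edge set $\{\{v_1\}\}$. Given the hypergraph of size $N$ (vertices $v_1,\dots,v_N$, exactly $N$ edges), one chooses an existing edge $e$ uniformly at random, independently of the past, and adds a new vertex $v_{N+1}$ together with the new edge $e\cup\{v_{N+1}\}$; this gives the hypergraph of size $N+1$. The degree $d(v)$ of a vertex $v$ is the number of edges containing $v$. $\mathcal{N}_k(N)$ denotes the number of vertices of degree $k$ in the RRH of size $N$. *)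

From mathcomp Require Import all_boot all_order all_algebra all_fingroup.
Set Implicit Arguments. Unset Strict Implicit. Unset Printing Implicit Defensive.
Import GRing.Theory Num.Theory.

(* Vertices v_1,...,v_N are encoded as 0,...,N-1; an edge is a seq of vertices.
   A history of the process up to size N is the sequence of choices c 0,...,c (N-2),
   where c k (< k+1) is the index (0-based) of the existing edge chosen when going
   from size k+1 to size k+2. *)

Fixpoint rrh_edges (c : nat -> nat) (k : nat) : seq (seq nat) :=
  match k with
  | 0 => [:: [:: 0]]
  | k'.+1 => let es := rrh_edges c k' in rcons es (k'.+1 :: nth [::] es (c k'))
  end.

Definition degree (es : seq (seq nat)) (v : nat) : nat := count (fun e => v \in e) es.

Definition numdeg (es : seq (seq nat)) (N k : nat) : nat :=
  count (fun v => degree es v == k) (iota 0 N).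

Definition history (N : nat) := {ffun 'I_N.-1 -> 'I_N}.

Definition valid_history N (f : history N) : bool := [forall k, (f k <= k)%N].

Definition choices N (f : history N) : nat -> nat :=
  fun k => odflt 0%N (omap (fun i : 'I_N.-1 => val (f i)) (insub k)).

Definition Nk N (k : nat) (f : history N) : nat := numdeg (rrh_edges (choices f) N.-1) N k.

(* Probability under the RRH law: each valid history is equally likely (each
   choice uniform among existing edges, independently). *)
Definition rrh_prob N (E : pred (history N)) : rat :=
  (#|[set f : history N | valid_history f && E f]|%:R
   / #|[set f : history N | valid_history f]|%:R)%R.

Definition descents m (s : 'S_m) : nat :=
  #|[set i : 'I_m | (i.+1 < m)%N && [exists j : 'I_m, (val j == i.+1) && (s j < s i)%N]]|.

Definition eulerian (m j : nat) : nat := #|[set s : 'S_m | descents s == j]|.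

From mathcomp Require Import all_boot all_order all_algebra all_fingroup.
From mathcomp Require Import zify.

(* A history of the process up to size m+1 is a list s of m choices with
   s_k <= k, so all m! histories are equally likely and the theorem is the
   equality of counts  #{s | leaves s = n+1} = #{t in S_m | des t = n}.
   Both statistics obey the same one-step recursion:
   - choosing the edge p of vertex p keeps the number L of leaves when p is a
     leaf (L choices) and increases it by one otherwise (m+1-L choices),
     because every other vertex of that edge already lies in two edges;
   - inserting the maximum m into a permutation of 0..m-1 with d descents
     keeps d at d+1 slots and increases it at the other m-d slots.
   Hence  sum_s F (leaves s) = sum_t F (des t + 1)  for every F, by induction
   on m (leaves_des_sum). *)

Lemma sum_ite (T : Type) (a : pred T) (l : seq T) (u v : nat) :
  \sum_(i <- l) (if a i then u else v) = count a l * u + (size l - count a l) * v.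
Proof.
elim: l => [|x l IH]; first by rewrite big_nil.
rewrite big_cons IH /=; have := count_size a l.
case: (a x) => /= H; first by rewrite add1n subSS mulSn addnA.
by rewrite add0n subSn // mulSn addnCA.
Qed.

Lemma count_iotaS (P : pred nat) n :
  count P (iota 0 n.+1) = P 0 + count (fun k => P k.+1) (iota 0 n).
Proof. by rewrite /= -[1]/(1 + 0) iotaDl count_map. Qed.

Lemma count_predD1 (a : pred nat) p l : uniq l -> p \in l ->
  count (fun v => a v && (v != p)) l = count a l - a p.
Proof.
by move=> Ul Pl; rewrite -count_filter -rem_filter // count_rem Pl.
Qed.

Fixpoint des (l : seq nat) : nat :=
  match l with
  | x :: r => (if r is y :: _ then y < x else false) + des r
  | [::] => 0
  end.

Lemma des_cons2 x y l : des [:: x, y & l] = (y < x) + des (y :: l).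
Proof. by []. Qed.

Lemma des_count l :
  des l = count (fun k => (k.+1 < size l) && (nth 0 l k.+1 < nth 0 l k)) (iota 0 (size l)).
Proof. by elim: l => [//|x r IH]; rewrite count_iotaS /= IH; case: r {IH}. Qed.

Definition ins (i x : nat) (t : seq nat) : seq nat := take i t ++ x :: drop i t.

Lemma ins0 x t : ins 0 x t = x :: t.
Proof. by rewrite /ins take0 drop0. Qed.

Lemma insS i x y t : ins i.+1 x (y :: t) = y :: ins i x t.
Proof. by []. Qed.

Lemma ins_nil i x : ins i x [::] = [:: x].
Proof. by case: i. Qed.

Section InsertMaximum.
Variable M : nat.

Lemma des_ins_bound t i : all (fun z => z < M) t ->
  des t <= des (ins i M t) <= (des t).+1.
Proof.
elim: t i => [|x r IH] [|j]; rewrite ?ins_nil ?ins0 // => /andP [xM Hr].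
  by rewrite /= xM; lia.
have Mx : (M < x) = false by apply/negbTE; rewrite -leqNgt ltnW.
rewrite insS; case: r IH Hr => [|y r] IH Hr; first by rewrite ins_nil /= Mx.
case: j => [|k]; last by have := IH k.+1 Hr; rewrite !insS /=; lia.
move: Hr => /andP [yM _].
by rewrite ins0 !des_cons2 Mx yM; case: (y < x); lia.
Qed.

(* Among the (size t).+1 insertion slots, exactly (des t).+1 keep the
   number of descents: the last slot and the slot inside each descent. *)
Lemma count_ins_same_des t : all (fun z => z < M) t ->
  count (fun i => des (ins i M t) == des t) (iota 0 (size t).+1) = (des t).+1.
Proof.
have front_slot s : all (fun z => z < M) s -> s != [::] ->
    (des (ins 0 M s) == des s) = false.
  case: s => [//|x s] /andP [xM _] _; rewrite ins0 des_cons2 xM.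
  by apply/eqP; lia.
elim: t => [//|x r IH] /[dup] Hxr /andP [xM Hr].
have Mx : (M < x) = false by apply/negbTE; rewrite -leqNgt ltnW.
rewrite count_iotaS front_slot // add0n.
case: r IH Hr {Hxr} => [|y r] IH Hr; first by rewrite /= Mx.
rewrite count_iotaS front_slot // add0n in IH.
have /andP [yM _] := Hr.
have slot1 : (des (ins 1 M [:: x, y & r]) == des [:: x, y & r]) = (y < x).
  by rewrite insS ins0 !des_cons2 Mx yM; case: (y < x); apply/eqP; lia.
have later_slots : count (fun k => des (ins k.+2 M [:: x, y & r]) == des [:: x, y & r])
    (iota 0 (size (y :: r))) = (des (y :: r)).+1.
  rewrite -IH //; apply: eq_count => k.
  by rewrite insS [ins _ _ (y :: r)]insS !des_cons2 eqn_add2l.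
by rewrite count_iotaS slot1 later_slots des_cons2 addnS.
Qed.

Lemma sum_ins (F : nat -> nat) t : all (fun z => z < M) t ->
  \sum_(i <- iota 0 (size t).+1) F (des (ins i M t)) =
  (des t).+1 * F (des t) + (size t - des t) * F (des t).+1.
Proof.
move=> Hall.
rewrite (eq_bigr (fun i => if des (ins i M t) == des t then F (des t) else F (des t).+1)).
  by rewrite sum_ite count_ins_same_des // size_iota subSS.
move=> i _; case: eqP => [-> //|Hne].
by have := des_ins_bound t i Hall => Hb; congr F; lia.
Qed.

End InsertMaximum.

Lemma index_ins [x t i] : x \notin t -> i <= size t -> index x (ins i x t) = i.
Proof.
move=> xt it; rewrite /ins index_cat /= eqxx addn0 size_takel //.
by have -> : (x \in take i t) = false by apply/negbTE; apply: contra xt; apply: mem_take.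
Qed.

Lemma rem_ins [x t i] : x \notin t -> i <= size t -> rem x (ins i x t) = t.
Proof.
move=> xt it; have sz : size (take i t) = i by rewrite size_takel.
rewrite remE index_ins // /ins take_size_cat // -cat_rcons drop_size_cat ?size_rcons ?sz //.
exact: cat_take_drop.
Qed.

Lemma ins_index_rem x s : x \in s -> ins (index x s) x (rem x s) = s.
Proof.
move=> xs; have ix : index x s < size s by rewrite index_mem.
rewrite remE /ins take_size_cat ?drop_size_cat ?size_takel ?(ltnW ix) //.
by rewrite -[x in x :: _](nth_index x xs) -drop_nth // cat_take_drop.
Qed.

Lemma perm_ins i x t : perm_eq (ins i x t) (x :: t).
Proof. by rewrite /ins -cat1s perm_catCA /= perm_cons cat_take_drop. Qed.

Lemma perm_iotaS m : perm_eq (iota 0 m.+1) (m :: iota 0 m).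
Proof. by rewrite -addn1 iotaD add0n perm_catC. Qed.

Lemma permutations_iotaS m :
  perm_eq (permutations (iota 0 m.+1))
    [seq ins i m t | t <- permutations (iota 0 m), i <- iota 0 m.+1].
Proof.
have m_notin t : t \in permutations (iota 0 m) -> m \notin t.
  by rewrite mem_permutations => /perm_mem ->; rewrite mem_iota ltnn andbF.
have size_perm t : t \in permutations (iota 0 m) -> size t = m.
  by rewrite mem_permutations => /perm_size ->; rewrite size_iota.
apply: uniq_perm; first exact: permutations_uniq.
- apply: allpairs_uniq; [exact: permutations_uniq | exact: iota_uniq|].
  move=> [t i] [t' j] /allpairsP [[t1 i1] [Ht1 Hi1 [-> ->]]]
    /allpairsP [[t2 i2] [Ht2 Hi2 [-> ->]]] /= Heq; move: Ht1 Ht2 => /= Ht1 Ht2.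
  have le1 : i1 <= size t1 by rewrite size_perm //; move: Hi1; rewrite mem_iota.
  have le2 : i2 <= size t2 by rewrite size_perm //; move: Hi2; rewrite mem_iota.
  have Ei : i1 = i2.
    by rewrite -(index_ins (m_notin _ Ht1) le1) Heq index_ins // m_notin.
  have Et : t1 = t2 by rewrite -(rem_ins (m_notin _ Ht1) le1) Heq rem_ins // m_notin.
  by rewrite Ei Et.
move=> x; rewrite mem_permutations; apply/idP/allpairsP => [Hx|[[t i] [Ht _ ->]]].
  have mx : m \in x by rewrite (perm_mem Hx) mem_iota add0n ltnSn.
  exists (rem m x, index m x); split; last by rewrite ins_index_rem.
    rewrite mem_permutations -(perm_cons m) -(permPr (perm_iotaS m)).
    by rewrite -(permPl (perm_to_rem mx)).
  by rewrite mem_iota add0n -[m.+1](size_iota 0) -(perm_size Hx) index_mem.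
rewrite mem_permutations in Ht.
by rewrite (permPl (perm_ins _ m _)) (permPr (perm_iotaS m)) perm_cons.
Qed.

Lemma rrh_edges_ext c c' k : (forall i, i < k -> c i = c' i) ->
  rrh_edges c k = rrh_edges c' k.
Proof.
elim: k => [//|k IH] Hcc' /=.
by rewrite IH ?Hcc' // => i Hi; apply: Hcc'; rewrite ltnS ltnW.
Qed.

Lemma size_rrh_edges c k : size (rrh_edges c k) = k.+1.
Proof. by elim: k => //= k IH; rewrite size_rcons IH. Qed.

Lemma rrh_vertex_bound [c k e v] : e \in rrh_edges c k -> v \in e -> v <= k.
Proof.
elim: k e v => [|k IH] e v /=; first by rewrite inE => /eqP ->; rewrite inE => /eqP ->.
rewrite mem_rcons inE => /orP [/eqP ->|He]; last by move/(IH _ _ He); lia.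
rewrite inE => /orP [/eqP -> //|Hv].
have [Hck|Hck] := ltnP (c k) (size (rrh_edges c k)).
  by have := IH _ v (mem_nth [::] Hck) Hv; lia.
by move: Hv; rewrite nth_default.
Qed.

(* The v-th edge is the one created together with vertex v, so it contains v. *)
Lemma rrh_vertex_in_own_edge c [k v] : v <= k -> v \in nth [::] (rrh_edges c k) v.
Proof.
elim: k v => [|k IH] v; first by rewrite leqn0 => /eqP ->.
move=> Hv /=; rewrite nth_rcons size_rrh_edges.
case: ltnP => Hv'; first by apply: IH; lia.
have -> : v = k.+1 by lia.
by rewrite eqxx inE eqxx.
Qed.

Lemma degree_rcons es e v : degree (rcons es e) v = degree es v + (v \in e).
Proof. by rewrite /degree -cats1 count_cat /= addn0. Qed.

Lemma degree_new_vertex c k : degree (rrh_edges c k) k.+1 = 0.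
Proof.
apply/eqP; rewrite /degree -leqn0 leqNgt -has_count; apply/hasP => [[e He Hv]].
by have := rrh_vertex_bound He Hv; rewrite ltnn.
Qed.

Lemma degree_lower_bound es v (I : seq nat) : uniq I ->
  (forall i, i \in I -> (i < size es) && (v \in nth [::] es i)) ->
  size I <= degree es v.
Proof.
move=> uI HI; rewrite /degree -{1}(mkseq_nth [::] es) count_map -size_filter.
apply: uniq_leq_size => // i /HI /andP [Hi Hv].
by rewrite mem_filter mem_iota /= Hv Hi.
Qed.

Section OneChoice.
Variables (c : nat -> nat) (k p : nat).
Hypothesis p_le_k : p <= k.
Let es := rrh_edges c k.
Let es' := rcons es (k.+1 :: nth [::] es p).

(* Attaching the new vertex to edge p turns at most one old leaf into a
   non-leaf, namely vertex p when it was a leaf: every other vertex of edge p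
   already lies in two edges (its own edge and edge p). *)
Lemma leaf_after_choice v : v <= k ->
  (degree es' v == 1) = (degree es v == 1) && (v != p).
Proof.
move=> v_le_k; rewrite degree_rcons inE.
have -> : (v == k.+1) = false by apply/negbTE; rewrite neq_ltn ltnS v_le_k.
rewrite /= /es.
have own := rrh_vertex_in_own_edge c v_le_k.
have in_range i : i <= k -> i < size (rrh_edges c k) by rewrite size_rrh_edges.
case Hvp: (v \in nth [::] (rrh_edges c k) p); last first.
  rewrite addn0; have [v_eq_p|_] := eqVneq v p; last by rewrite andbT.
  by move: Hvp; rewrite -v_eq_p own.
have [v_eq_p | v_ne_p] := eqVneq v p.
  rewrite andbF addn1 eqSS; apply/negbTE; rewrite -lt0n.
  apply: (@degree_lower_bound _ _ [:: p]) => // i.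
  by rewrite inE => /eqP ->; rewrite in_range // -v_eq_p.
have two : 2 <= degree (rrh_edges c k) v.
  apply: (@degree_lower_bound _ _ [:: v; p]); first by rewrite /= inE v_ne_p.
  by move=> i; rewrite !inE => /orP [/eqP -> | /eqP ->]; rewrite in_range ?own.
by rewrite andbT addn1 eqSS (gtn_eqF two) (gtn_eqF (ltnW two)).
Qed.

End OneChoice.

Definition rrh_of (s : seq nat) : seq (seq nat) := rrh_edges (nth 0 s) (size s).
Definition leaves (s : seq nat) : nat := numdeg (rrh_of s) (size s).+1 1.

Lemma rrh_of_rcons s p :
  rrh_of (rcons s p) = rcons (rrh_of s) ((size s).+1 :: nth [::] (rrh_of s) p).
Proof.
rewrite /rrh_of size_rcons /= nth_rcons ltnn eqxx.
suff -> : rrh_edges (nth 0 (rcons s p)) (size s) = rrh_edges (nth 0 s) (size s) by [].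
by apply: rrh_edges_ext => i Hi; rewrite nth_rcons Hi.
Qed.

Lemma leaves_rcons s p : p <= size s ->
  leaves (rcons s p) = if degree (rrh_of s) p == 1 then leaves s else (leaves s).+1.
Proof.
move=> p_le; set a := fun v => degree (rrh_of s) v == 1.
have old_vertices : count (fun v => degree (rrh_of (rcons s p)) v == 1) (iota 0 (size s).+1)
    = leaves s - a p.
  rewrite -count_predD1 ?iota_uniq ?mem_iota //; apply: eq_in_count => v.
  rewrite mem_iota add0n ltnS => /andP [_ v_le]; rewrite rrh_of_rcons.
  exact: leaf_after_choice.
have new_vertex : degree (rrh_of (rcons s p)) (size s).+1 = 1.
  by rewrite rrh_of_rcons degree_rcons degree_new_vertex inE eqxx.
have p_counted : a p -> 0 < leaves s.
  move=> ap; rewrite /leaves /numdeg -/a -has_count; apply/hasP; exists p => //.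
  by rewrite mem_iota add0n ltnS.
have split_iota : iota 0 (size s).+2 = iota 0 (size s).+1 ++ [:: (size s).+1].
  by rewrite -addn1 iotaD.
rewrite {1}/leaves size_rcons /numdeg split_iota count_cat old_vertices /= new_vertex.
rewrite eqxx -/(a p); case: (a p) p_counted => /= [/(_ isT)|_]; lia.
Qed.

Lemma sum_leaves_rcons (F : nat -> nat) s :
  \sum_(p <- iota 0 (size s).+1) F (leaves (rcons s p)) =
  leaves s * F (leaves s) + ((size s).+1 - leaves s) * F (leaves s).+1.
Proof.
rewrite big_seq (eq_bigr (fun p => if degree (rrh_of s) p == 1 then F (leaves s)
                                    else F (leaves s).+1)).
  by rewrite -big_seq sum_ite size_iota.
by move=> p; rewrite mem_iota add0n ltnS => /andP [_ /leaves_rcons ->]; case: ifP.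
Qed.

Fixpoint choice_seqs (m : nat) : seq (seq nat) :=
  if m is m'.+1 then [seq rcons s p | s <- choice_seqs m', p <- iota 0 m'.+1]
  else [:: [::]].

Lemma choice_seqsS m :
  choice_seqs m.+1 = [seq rcons s p | s <- choice_seqs m, p <- iota 0 m.+1].
Proof. by []. Qed.

Lemma mem_choice_seqs m s :
  (s \in choice_seqs m) = (size s == m) && all (fun k => nth 0 s k <= k) (iota 0 m).
Proof.
elim: m s => [|m IH] s; first by rewrite inE andbT size_eq0.
apply/allpairsP/andP => [[[s' p] [Hs' Hp ->]]|].
  rewrite mem_iota in Hp; simpl in Hs', Hp.
  move: Hs'; rewrite IH => /andP [/eqP Hsz Hall].
  rewrite size_rcons Hsz; split=> //; apply/allP => k; rewrite mem_iota add0n ltnS.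
  case/andP=> _; rewrite leq_eqVlt nth_rcons Hsz => /orP [/eqP ->|Hk].
    by rewrite ltnn eqxx; move: Hp; rewrite add0n ltnS.
  by rewrite Hk; apply: (allP Hall); rewrite mem_iota.
case/lastP: s => [|s p]; first by case.
rewrite size_rcons => [[/eqP [Hsz] Hall]]; exists (s, p); split => //.
  rewrite IH Hsz eqxx /=; apply/allP => k; rewrite mem_iota add0n => /andP [_ Hk].
  have := allP Hall k; rewrite nth_rcons Hsz Hk mem_iota add0n ltnS (ltnW Hk).
  by apply.
have := allP Hall m; rewrite !mem_iota nth_rcons Hsz ltnn eqxx add0n ltnS leqnn.
by apply.
Qed.

Lemma choice_seqs_uniq m : uniq (choice_seqs m).
Proof.
elim: m => // m IH; apply: allpairs_uniq => //; first exact: iota_uniq.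
by move=> [s p] [s' p'] _ _ /= /rcons_inj.
Qed.

Lemma size_choice_seqs m : size (choice_seqs m) = m`!.
Proof. by elim: m => // m IH; rewrite size_allpairs IH size_iota factS mulnC. Qed.

(* The core identity: the number of leaves of the RRH of size m+1 and one plus
   the number of descents of a permutation of 0..m-1 have the same
   distribution, since both statistics obey the same one-step recursion. *)
Lemma leaves_des_sum m (F : nat -> nat) :
  \sum_(s <- choice_seqs m) F (leaves s) =
  \sum_(t <- permutations (iota 0 m)) F (des t).+1.
Proof.
elim: m F => [|m IH] F; first by rewrite /= !big_seq1.
rewrite choice_seqsS big_allpairs_dep (perm_big _ (permutations_iotaS m)) big_allpairs_dep.
have one_step s : s \in choice_seqs m ->
    \sum_(p <- iota 0 m.+1) F (leaves (rcons s p)) =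
    leaves s * F (leaves s) + (m.+1 - leaves s) * F (leaves s).+1.
  by rewrite mem_choice_seqs => /andP [/eqP <- _]; apply: sum_leaves_rcons.
transitivity (\sum_(s <- choice_seqs m)
    (leaves s * F (leaves s) + (m.+1 - leaves s) * F (leaves s).+1)).
  exact: eq_big_seq.
rewrite (IH (fun l => l * F l + (m.+1 - l) * F l.+1)).
apply: eq_big_seq => t; rewrite mem_permutations => Ht.
have size_t : size t = m by rewrite (perm_size Ht) size_iota.
have small : all (fun z => z < m) t by apply/allP => z; rewrite (perm_mem Ht) mem_iota.
by rewrite -[in iota 0 m.+1]size_t (sum_ins m (fun x => F x.+1)) // size_t subSS.
Qed.

Lemma leaves_des_count m n :
  count (fun s => leaves s == n.+1) (choice_seqs m) =
  count (fun t => des t == n) (permutations (iota 0 m)).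
Proof.
rewrite -!sum1_count big_mkcond [RHS]big_mkcond.
exact: (leaves_des_sum m (fun l => if l == n.+1 then 1 else 0)).
Qed.

Lemma card_set_count (T : finType) (P : pred T) : #|[set x | P x]| = count P (enum T).
Proof. by rewrite -sum1dep_card sum1_count enumT. Qed.

Lemma card_set_image (T : finType) (U : eqType) (P : pred T) (phi : T -> U)
    (L : seq U) (Q : pred U) :
  {in P &, injective phi} -> uniq L -> (forall x, P x -> phi x \in L) ->
  (forall y, y \in L -> exists2 x, P x & phi x = y) ->
  #|[set x | P x && Q (phi x)]| = count Q L.
Proof.
move=> phi_inj uniqL phi_in phi_onto.
have image_L : perm_eq [seq phi x | x <- enum T & P x] L.
  apply: uniq_perm => //.
    rewrite map_inj_in_uniq; first by rewrite filter_uniq // enum_uniq.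
    by move=> x y; rewrite !mem_filter => /andP [Px _] /andP [Py _]; apply: phi_inj.
  move=> y; apply/mapP/idP => [[x]|/phi_onto [x Px <-]].
    by rewrite mem_filter => /andP [Px _] ->; apply: phi_in.
  by exists x; rewrite // mem_filter Px mem_enum.
rewrite card_set_count -(seq.permP image_L) count_map count_filter.
by apply: eq_count => x; rewrite /= andbC.
Qed.

Definition ord_seq {m} (g : 'I_m -> nat) : seq nat :=
  mkseq (fun k => odflt 0 (omap g (insub k))) m.

Lemma size_ord_seq m (g : 'I_m -> nat) : size (ord_seq g) = m.
Proof. exact: size_mkseq. Qed.

Lemma nth_ord_seq m (g : 'I_m -> nat) (i : 'I_m) : nth 0 (ord_seq g) i = g i.
Proof. by rewrite nth_mkseq // valK. Qed.

Lemma ord_seq_inj [m] [g g' : 'I_m -> nat] : ord_seq g = ord_seq g' -> g =1 g'.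
Proof. by move=> Egg' i; rewrite -nth_ord_seq Egg' nth_ord_seq. Qed.

Lemma ord_seq_nth m (l : seq nat) (g : 'I_m -> nat) :
  size l = m -> (forall i : 'I_m, g i = nth 0 l i) -> ord_seq g = l.
Proof.
move=> size_l Eg; apply: (@eq_from_nth _ 0); first by rewrite size_ord_seq.
by rewrite size_ord_seq => k Hk; rewrite -[k]/(val (Ordinal Hk)) nth_ord_seq Eg.
Qed.

Definition hist_seq {N} (f : history N) : seq nat := ord_seq (fun i => val (f i)).

Lemma Nk1_leaves m (f : history m.+1) : Nk 1 f = leaves (hist_seq f).
Proof.
rewrite /Nk /leaves /rrh_of /hist_seq size_ord_seq; congr numdeg.
by apply: rrh_edges_ext => i Hi; rewrite nth_mkseq.
Qed.

Lemma hist_seq_valid m (f : history m.+1) :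
  (hist_seq f \in choice_seqs m) = valid_history f.
Proof.
rewrite mem_choice_seqs size_ord_seq eqxx /=; apply/allP/forallP => valid k.
  by have := valid k; rewrite mem_iota ltn_ord nth_ord_seq; apply.
rewrite mem_iota add0n => /andP [_ Hk].
by rewrite /hist_seq -[k]/(val (Ordinal Hk)) nth_ord_seq; apply: valid.
Qed.

Lemma card_histories m (Q : pred (seq nat)) :
  #|[set f : history m.+1 | valid_history f && Q (hist_seq f)]| = count Q (choice_seqs m).
Proof.
apply: card_set_image.
- move=> f f' _ _ Eff'; apply/ffunP => i; apply: val_inj; exact: (ord_seq_inj Eff').
- exact: choice_seqs_uniq.
- by move=> f; rewrite hist_seq_valid.
move=> s s_valid; move: (s_valid); rewrite mem_choice_seqs => /andP [/eqP size_s small].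
have nth_s (i : 'I_m) : nth 0 s i < m.+1.
  have := allP small i; rewrite mem_iota add0n ltn_ord => /(_ isT) le_i.
  by rewrite ltnS (leq_trans le_i) // ltnW.
pose f : history m.+1 := [ffun i : 'I_m => inord (nth 0 s i)].
have f_s : hist_seq f = s by apply: ord_seq_nth => // i; rewrite /f ffunE; exact: inordK.
by exists f; rewrite // -hist_seq_valid f_s.
Qed.

Definition perm_seq {m} (s : 'S_m) : seq nat := ord_seq (fun i => val (s i)).

Lemma descents_perm_seq m (s : 'S_m) : descents s = des (perm_seq s).
Proof.
rewrite /descents card_set_count des_count size_ord_seq -val_enum_ord count_map.
apply: eq_count => i /=; case Hi: (i.+1 < m) => //=.
rewrite /perm_seq -[i.+1]/(val (Ordinal Hi)) !nth_ord_seq.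
apply/existsP/idP => [[j /andP [/eqP Ej lt_ji]]|lt_i].
  by have -> : Ordinal Hi = j by apply: val_inj; rewrite /= Ej.
by exists (Ordinal Hi); rewrite eqxx.
Qed.

Lemma perm_seq_permutation m (s : 'S_m) : perm_seq s \in permutations (iota 0 m).
Proof.
rewrite mem_permutations /perm_seq; apply: uniq_perm; last 1 first.
- move=> x; rewrite mem_iota add0n; apply/idP/idP.
    case/(nthP 0) => k; rewrite size_ord_seq => Hk <-.
    by rewrite -[k]/(val (Ordinal Hk)) nth_ord_seq leq0n /=; apply: ltn_ord.
  move=> Hx; apply/(nthP 0); exists ((s^-1)%g (Ordinal Hx)); first by rewrite size_ord_seq.
  by rewrite nth_ord_seq permKV.
- apply/(uniqP 0) => k k'; rewrite !inE size_ord_seq => Hk Hk'.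
  rewrite -[k]/(val (Ordinal Hk)) -[k']/(val (Ordinal Hk')) !nth_ord_seq.
  by move/val_inj/perm_inj => [].
- exact: iota_uniq.
Qed.

Lemma perm_seq_onto m l :
  l \in permutations (iota 0 m) -> exists2 s : 'S_m, true & perm_seq s = l.
Proof.
rewrite mem_permutations => Hl.
have size_l : size l = m by rewrite (perm_size Hl) size_iota.
have uniq_l : uniq l by rewrite (perm_uniq Hl) iota_uniq.
case: m Hl size_l => [|m] Hl size_l.
  by exists 1%g => //; apply: ord_seq_nth => // -[].
have nth_l (i : 'I_m.+1) : nth 0 l i < m.+1.
  have : nth 0 l i \in l by rewrite mem_nth // size_l.
  by rewrite (perm_mem Hl) mem_iota.
pose g (i : 'I_m.+1) : 'I_m.+1 := inord (nth 0 l i).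
have g_inj : injective g.
  move=> i j /(congr1 (@nat_of_ord _)); rewrite /g !inordK // => /eqP.
  by rewrite nth_uniq ?size_l // => /eqP; apply: val_inj.
by exists (perm g_inj) => //; apply: ord_seq_nth => // i; rewrite permE; apply: inordK.
Qed.

Lemma eulerian_count m k :
  eulerian m k = count (fun t => des t == k) (permutations (iota 0 m)).
Proof.
rewrite /eulerian -(@card_set_image _ _ predT (@perm_seq m)).
- by apply: eq_card => s; rewrite !inE descents_perm_seq.
- by move=> s s' _ _ E; apply/permP => i; apply: val_inj; apply: (ord_seq_inj E).
- exact: permutations_uniq.
- by move=> s _; apply: perm_seq_permutation.
- exact: perm_seq_onto.
Qed.

Theorem mainTheorem1 (N n : nat) : (1 <= N)%N -> (1 <= n)%N ->
  rrh_prob (fun f : history N => Nk 1 f == n) =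
  ((eulerian N.-1 n.-1)%:R / (N.-1)`!%:R)%R.
Proof.
case: N => [//|m] _; case: n => [//|n] _; rewrite /rrh_prob /=.
have valid_count : #|[set f : history m.+1 | valid_history f]| = m`!.
  rewrite -size_choice_seqs -count_predT -(card_histories m predT).
  by apply: eq_card => f; rewrite !inE andbT.
have leaf_count : #|[set f : history m.+1 | valid_history f && (Nk 1 f == n.+1)]| =
    eulerian m n.
  rewrite eulerian_count -leaves_des_count -card_histories.
  by apply: eq_card => f; rewrite !inE Nk1_leaves.
by rewrite valid_count leaf_count.
Qed.
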